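(* (a) The minimal Lagrangian fibres of a cohomogeneity-1 toric Kähler metric on $\mathbb{CP}^2$ sit above the diagonal $\triangle=\{x_1=x_2\}$ in the standard simplex $P$. (b) A cohomogeneity-1 toric Kähler metric on $\mathbb{CP}^2$ which is analytic admits a finite set of minimal Lagrangian fibres. (c) There is a (non-analytic) cohomogeneity-1 toric Kähler metric on $\mathbb{CP}^2$ which admits a continuum of minimal Lagrangian fibres. (d) Given a finite subset $\{p_1,\dots,p_k\}\subset \mathrm{int}\, P\cap \triangle$, there is a cohomogeneity-1 toric Kähler metric on $\mathbb{CP}^2$ whose set of minimal Lagrangian fibres is precisely (the set of fibres over) $\{p_1,\dots,p_k\}$.
   Context: $\mathbb{CP}^2$ is regarded as a toric manifold with moment map $\mu$ whose moment polytope is the standard simplex $P=\{x\in\mathbb{R}^2: l_i(x)\ge 0\}$, with $l_1(x)=x_1$, $l_2(x)=x_2$, $l_3(x)=1-x_1-x_2$. Toric Kähler metrics are described in action-angle coordinates $(x,\theta)$ by a symplectic potential $u$ on $P$, with $g=u_{ij}\,dx^i dx^j+u^{ij}\,d\theta^i d\theta^j$, where $u_{ij}=\partial^2 u/\partial x^i\partial x^j$ and $(u^{ij})$ is its inverse; $u-u_G$ is smooth on a neighbourhood of $P$, where $u_G=\tfrac12\sum_i(l_i\log l_i-l_i)$ is the Guillemin potential. A cohomogeneity-1 toric Kähler metric on $\mathbb{CP}^2$ is one whose symplectic potential has the form $u(x)=u_G(x)+\tfrac12 f(x_1+x_2)$ for a function $f$ of one variable (positivity of the Hessian amounts to $f''(t)>-\frac{1}{t(t-1)}$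 for $0<t<1$). A fibre $\mu^{-1}(x)$, $x\in\mathrm{int}\,P$, is a minimal Lagrangian torus if and only if $x$ is a critical point of the orbital volume function $V=(\det \mathrm{Hess}(u))^{-1/2}$ (equivalently of $\log\det\mathrm{Hess}(u)$); ''minimal Lagrangian fibres'' refers to such fibres. *)

From Stdlib Require Import Reals Lra List.
From Coquelicot Require Import Coquelicot.
Open Scope R_scope.

Definition l1 (x : R * R) : R := fst x.
Definition l2 (x : R * R) : R := snd x.
Definition l3 (x : R * R) : R := 1 - fst x - snd x.

Definition int_simplex (x : R * R) : Prop := 0 < l1 x /\ 0 < l2 x /\ 0 < l3 x.

Definition on_diagonal (x : R * R) : Prop := fst x = snd x.

Definition uG (x : R * R) : R :=
  / 2 * ((l1 x * ln (l1 x) - l1 x) + (l2 x * ln (l2 x) - l2 x)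
         + (l3 x * ln (l3 x) - l3 x)).

Definition upot (f : R -> R) (x : R * R) : R :=
  uG x + / 2 * f (fst x + snd x).

Definition d11 (u : R * R -> R) (x : R * R) : R :=
  Derive (fun s => Derive (fun r => u (r, snd x)) s) (fst x).
Definition d22 (u : R * R -> R) (x : R * R) : R :=
  Derive (fun s => Derive (fun r => u (fst x, r)) s) (snd x).
Definition d12 (u : R * R -> R) (x : R * R) : R :=
  Derive (fun s => Derive (fun r => u (r, s)) (fst x)) (snd x).
Definition d21 (u : R * R -> R) (x : R * R) : R :=
  Derive (fun s => Derive (fun r => u (s, r)) (snd x)) (fst x).

Definition hess_posdef (u : R * R -> R) (x : R * R) : Prop :=
  forall v1 v2 : R, (v1, v2) <> (0, 0) ->
    0 < d11 u x * v1 * v1 + d12 u x * v1 * v2 + d21 u x * v2 * v1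
        + d22 u x * v2 * v2.

Definition det_hess (u : R * R -> R) (x : R * R) : R :=
  d11 u x * d22 u x - d12 u x * d21 u x.

Definition orbital_volume (u : R * R -> R) (x : R * R) : R :=
  / sqrt (det_hess u x).

Definition smooth_on (f : R -> R) (a b : R) : Prop :=
  forall (n : nat) (t : R), a < t < b -> ex_derive_n f n t.

Definition analytic_on (f : R -> R) (a b : R) : Prop :=
  forall t : R, a < t < b ->
    exists r : R, 0 < r /\ exists c : nat -> R,
      forall y : R, Rabs (y - t) < r -> is_pseries c (y - t) (f y).

(* f defines a cohomogeneity-1 toric Kahler metric on CP^2:
   u - u_G = f(x1+x2)/2 is smooth on a neighbourhood of P (equivalently f is
   smooth on a neighbourhood of [0,1]) and Hess(u) is positive definite
   on the interior of P. *)
Definition coh1_metric (f : R -> R) : Prop :=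
  (exists eps : R, 0 < eps /\ smooth_on f (- eps) (1 + eps)) /\
  (forall x : R * R, int_simplex x -> hess_posdef (upot f) x).

Definition coh1_analytic (f : R -> R) : Prop :=
  exists eps : R, 0 < eps /\ analytic_on f (- eps) (1 + eps).

(* The fibre over x in int P is minimal Lagrangian iff x is a critical point
   of the orbital volume function V (Frechet derivative zero at x). *)
Definition minimal_fibre (f : R -> R) (x : R * R) : Prop :=
  int_simplex x /\
  filterdiff (orbital_volume (upot f)) (locally x) (fun _ : R * R => 0).

From Stdlib Require Import Reals Lra Lia List Classical FinFun.
From Coquelicot Require Import Coquelicot.
Open Scope R_scope.

(* Write s = x1 + x2.  The Hessian of u = u_G + f(s)/2 has determinant
   K(s) / (4 x1 x2) with K(s) = 1 + s/(1-s) + s f''(s), and it is positive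
   definite iff K > 0 on (0,1); so V = (4 x1 x2 / K(s))^(1/2).  The partial
   derivatives of V vanish iff x1 K'(s) = K(s) = x2 K'(s): critical points lie
   on the diagonal, exactly where (1-s)^2 (2 K(s) - s K'(s)) = 0.  For analytic
   f this function is analytic on [0,1] and equals 2 at s = 0, hence has
   finitely many zeros.  Conversely, taking f'' = s w with w >= 0 and w' = h
   turns the critical equation into h(s) s^3 (1-s)^2 = 2 - 3s, so any smooth h
   prescribes the minimal fibres: h = (2 - 3s) / (s^3 (1-s)^2) on the plateau of
   a flat-top bump gives a whole interval of them, and perturbing it by
   (s - t0) prod_i (s - t_i)^2, which has the sign that rules out spurious
   roots off the plateau, leaves exactly the prescribed ones s = t_i. *)

(** * Smooth functions built from [exp (-1/x)] *)

Definition flat (j : nat) (x : R) : R :=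
  if Rlt_dec 0 x then (/ x) ^ j * exp (- / x) else 0.

Lemma flat_pos j x : 0 < x -> flat j x = (/ x) ^ j * exp (- / x).
Proof. intros Hx; unfold flat; destruct (Rlt_dec 0 x); [reflexivity | lra]. Qed.

Lemma flat_nonpos j x : x <= 0 -> flat j x = 0.
Proof. intros Hx; unfold flat; destruct (Rlt_dec 0 x); [lra | reflexivity]. Qed.

Lemma flat_ge0 j x : 0 <= flat j x.
Proof.
  unfold flat; destruct (Rlt_dec 0 x); [|lra].
  apply Rmult_le_pos; [apply pow_le; left; apply Rinv_0_lt_compat; lra | left; apply exp_pos].
Qed.

Lemma pow_mul_exp_opp_le (j : nat) (y : R) :
  0 < y -> y ^ j * exp (- y) <= INR (Factorial.fact (S j)) / y.
Proof.
  intros Hy.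
  set (F := INR (Factorial.fact (S j))).
  assert (HF : 0 < F) by apply INR_fact_lt_0.
  assert (Htaylor : y ^ S j / F <= exp y).
  { eapply Rle_trans; [|apply (exp_ge_taylor y (S j)); lra].
    rewrite tech5.
    assert (0 <= sum_f_R0 (fun k => y ^ k / INR (Factorial.fact k)) j); [|unfold F; lra].
    apply cond_pos_sum; intros k; apply Rmult_le_pos; [apply pow_le; lra|].
    left; apply Rinv_0_lt_compat, INR_fact_lt_0. }
  pose proof (exp_pos y).
  rewrite exp_Ropp; simpl pow in Htaylor.
  apply (Rmult_le_reg_r (exp y * y / F)); [apply Rdiv_lt_0_compat; nra|].
  replace (y ^ j * / exp y * (exp y * y / F)) with (y * y ^ j / F) by (field; lra).
  replace (F / y * (exp y * y / F)) with (exp y) by (field; lra).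
  exact Htaylor.
Qed.

Lemma flat_small (j : nat) (eps : R) :
  0 < eps -> exists d, 0 < d /\ forall h, 0 < h < d -> flat j h < eps.
Proof.
  intros He.
  set (F := INR (Factorial.fact (S j))).
  assert (HF : 0 < F) by apply INR_fact_lt_0.
  exists (eps / F); split; [apply Rdiv_lt_0_compat; lra|].
  intros h [Hh Hhd]; rewrite flat_pos by lra.
  assert (Hy : 0 < / h) by (apply Rinv_0_lt_compat; lra).
  eapply Rle_lt_trans; [apply (pow_mul_exp_opp_le j (/ h) Hy)|].
  fold F; replace (F / / h) with (F * h) by (field; lra).
  apply (Rmult_lt_reg_r (/ F)); [apply Rinv_0_lt_compat; lra|].
  replace (F * h * / F) with h by (field; lra); exact Hhd.
Qed.

Lemma is_derive_flat (j : nat) (x : R) :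
  is_derive (flat j) x (- INR j * flat (S j) x + flat (S (S j)) x).
Proof.
  destruct (Rlt_dec 0 x) as [Hx|Hx]; [|destruct (Rlt_dec x 0) as [Hx'|Hx']].
  - rewrite !flat_pos by lra.
    apply is_derive_ext_loc with (fun x => (/ x) ^ j * exp (- / x)).
    { apply filter_imp with (fun t => 0 < t); [|now apply open_gt].
      intros t Ht; now rewrite flat_pos. }
    auto_derive; [repeat split; lra|].
    destruct j; simpl pred; simpl pow; [simpl INR | rewrite S_INR]; field; lra.
  - rewrite !flat_nonpos by lra.
    apply is_derive_ext_loc with (fun _ => 0).
    { apply filter_imp with (fun t => t < 0); [|now apply open_lt].
      intros t Ht; now rewrite flat_nonpos by lra. }
    replace (- INR j * 0 + 0) with 0 by ring; auto_derive; auto.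
  - assert (x = 0) by lra; subst x.
    rewrite !flat_nonpos by lra; replace (- INR j * 0 + 0) with 0 by ring.
    (* at 0 the difference quotient is [flat (S j) h] or [0] *)
    apply is_derive_Reals; intros eps Heps.
    destruct (flat_small (S j) eps Heps) as [d [Hd Hsmall]].
    exists (mkposreal d Hd); intros h Hh0 Hh; simpl in Hh.
    rewrite Rplus_0_l, (flat_nonpos j 0) by lra.
    destruct (Rlt_dec 0 h) as [Hp|Hp].
    + replace ((flat j h - 0) / h - 0) with (flat (S j) h).
      * rewrite Rabs_pos_eq by apply flat_ge0.
        apply Hsmall; split; [lra | apply Rabs_def2 in Hh; lra].
      * rewrite !flat_pos by lra; simpl; field; lra.
    + rewrite flat_nonpos by lra.
      replace ((0 - 0) / h - 0) with 0 by (field; lra); rewrite Rabs_R0; lra.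
Qed.

Lemma is_derive_RInt_0 (g : R -> R) (x : R) :
  (forall t, continuous g t) -> is_derive (fun t => RInt g 0 t) x (g x).
Proof.
  intros Hg; apply (is_derive_RInt g _ 0 x); [|apply Hg].
  apply filter_forall; intros b.
  apply (RInt_correct (V := R_CompleteNormedModule)).
  apply (ex_RInt_continuous (V := R_CompleteNormedModule)); intros t _; apply Hg.
Qed.

(* Every closure operation below preserves "differentiable everywhere with
   derivative again in the class", so all members are C^infinity. *)
Inductive Cinf : (R -> R) -> Prop :=
| Cinf_const c : Cinf (fun _ => c)
| Cinf_id : Cinf (fun x => x)
| Cinf_plus f g : Cinf f -> Cinf g -> Cinf (fun x => f x + g x)
| Cinf_mult f g : Cinf f -> Cinf g -> Cinf (fun x => f x * g x)
| Cinf_comp f g : Cinf f -> Cinf g -> Cinf (fun x => f (g x))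
| Cinf_inv f : Cinf f -> (forall x, f x <> 0) -> Cinf (fun x => / f x)
| Cinf_flat j : Cinf (flat j)
| Cinf_RInt f : Cinf f -> Cinf (fun x => RInt f 0 x)
| Cinf_ext f g : Cinf f -> (forall x, f x = g x) -> Cinf g.

Lemma Cinf_derive f : Cinf f -> exists f', Cinf f' /\ forall x, is_derive f x (f' x).
Proof.
  induction 1 as [c| |f g _ [f' [Cf' Df]] _ [g' [Cg' Dg]]
                  |f g Cf [f' [Cf' Df]] Cg [g' [Cg' Dg]]
                  |f g _ [f' [Cf' Df]] Cg [g' [Cg' Dg]]
                  |f Cf [f' [Cf' Df]] Hf0|j|f Cf [f' [_ Df]]|f g _ [f' [Cf' Df]] Hfg].
  - exists (fun _ => 0); split; [apply Cinf_const|intros; auto_derive; auto].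
  - exists (fun _ => 1); split; [apply Cinf_const|intros; auto_derive; auto].
  - exists (fun x => f' x + g' x); split; [now apply Cinf_plus|].
    intros x; now apply (is_derive_plus f g).
  - exists (fun x => f' x * g x + f x * g' x); split.
    + apply Cinf_plus; now apply Cinf_mult.
    + intros x; apply (is_derive_mult f g); auto; intros; apply Rmult_comm.
  - exists (fun x => g' x * f' (g x)); split.
    + apply Cinf_mult; [|apply Cinf_comp]; assumption.
    + intros x; now apply (is_derive_comp f g).
  - exists (fun x => -1 * f' x * (/ f x * / f x)); split.
    + repeat apply Cinf_mult; try apply Cinf_inv; auto; apply Cinf_const.
    + intros x; replace (-1 * f' x * (/ f x * / f x)) with (- f' x / f x ^ 2)
        by (field; auto).
      now apply is_derive_inv.
  - exists (fun x => - INR j * flat (S j) x + flat (S (S j)) x); split.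
    + apply Cinf_plus; [apply Cinf_mult|]; apply Cinf_const || apply Cinf_flat.
    + apply is_derive_flat.
  - exists f; split; [assumption|].
    intros x; apply is_derive_RInt_0; intros t.
    apply (ex_derive_continuous (V := R_NormedModule)); eexists; apply Df.
  - exists f'; split; [assumption|].
    intros x; now apply is_derive_ext with f.
Qed.

Lemma Cinf_continuous f x : Cinf f -> continuous f x.
Proof.
  intros Cf; destruct (Cinf_derive f Cf) as [f' [_ Df]].
  apply (ex_derive_continuous (V := R_NormedModule)); eexists; apply Df.
Qed.

Lemma Cinf_Derive_n n f : Cinf f -> exists g, Cinf g /\ forall x, Derive_n f n x = g x.
Proof.
  intros Cf; induction n as [|n [g [Cg Eg]]]; [now exists f|].
  destruct (Cinf_derive g Cg) as [g' [Cg' Dg]].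
  exists g'; split; [assumption|]; intros x; simpl.
  rewrite (Derive_ext _ _ x Eg); now apply is_derive_unique.
Qed.

Lemma Cinf_ex_derive_n f n x : Cinf f -> ex_derive_n f n x.
Proof.
  intros Cf; destruct n as [|n]; [exact I|].
  destruct (Cinf_Derive_n n f Cf) as [g [Cg Eg]].
  destruct (Cinf_derive g Cg) as [g' [_ Dg]].
  apply ex_derive_ext with g; [intros; symmetry; apply Eg | eexists; apply Dg].
Qed.

Lemma Cinf_affine a b : Cinf (fun x => a * x + b).
Proof. apply Cinf_plus; [apply Cinf_mult|]; apply Cinf_const || apply Cinf_id. Qed.

Lemma Cinf_pow f n : Cinf f -> Cinf (fun x => f x ^ n).
Proof.
  intros Cf; induction n as [|n IH]; [exact (Cinf_const 1)|].
  now apply Cinf_mult.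
Qed.

Definition step (x : R) : R := flat 0 x / (flat 0 x + flat 0 (1 - x)).

Lemma step_denom_pos x : 0 < flat 0 x + flat 0 (1 - x).
Proof.
  pose proof (flat_ge0 0 x); pose proof (flat_ge0 0 (1 - x)).
  destruct (Rlt_dec 0 x).
  - rewrite (flat_pos 0 x) by lra; pose proof (exp_pos (- / x)); simpl; lra.
  - rewrite (flat_pos 0 (1 - x)) by lra; pose proof (exp_pos (- / (1 - x))); simpl; lra.
Qed.

Lemma Cinf_step : Cinf step.
Proof.
  apply Cinf_mult; [apply Cinf_flat|].
  apply Cinf_inv; [|intros x; pose proof (step_denom_pos x); lra].
  apply Cinf_plus; [apply Cinf_flat|].
  apply (Cinf_comp (flat 0) (fun x => 1 - x)); [apply Cinf_flat|].
  apply Cinf_ext with (fun x => -1 * x + 1); [apply Cinf_affine | intros; ring].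
Qed.

Lemma step_range x : 0 <= step x <= 1.
Proof.
  pose proof (step_denom_pos x); pose proof (flat_ge0 0 x); pose proof (flat_ge0 0 (1 - x)).
  unfold step; split; [apply Rdiv_le_0_compat; lra|].
  apply Rle_div_l; lra.
Qed.

Lemma step_eq0 x : x <= 0 -> step x = 0.
Proof. intros Hx; unfold step; rewrite (flat_nonpos 0 x Hx); unfold Rdiv; ring. Qed.

Lemma step_eq1 x : 1 <= x -> step x = 1.
Proof.
  intros Hx; pose proof (step_denom_pos x); unfold step in *.
  rewrite (flat_nonpos 0 (1 - x)) in * by lra; field; lra.
Qed.

Definition plateau (a0 a1 b1 b0 t : R) : R :=
  step ((t - a0) / (a1 - a0)) * step ((b0 - t) / (b0 - b1)).

Lemma Cinf_plateau a0 a1 b1 b0 : Cinf (plateau a0 a1 b1 b0).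
Proof.
  apply Cinf_mult; apply (Cinf_comp step); try apply Cinf_step;
    [ apply Cinf_ext with (fun t => / (a1 - a0) * t + - a0 / (a1 - a0))
    | apply Cinf_ext with (fun t => - / (b0 - b1) * t + b0 / (b0 - b1)) ];
    try apply Cinf_affine; intros; unfold Rdiv; ring.
Qed.

Lemma plateau_range a0 a1 b1 b0 t : 0 <= plateau a0 a1 b1 b0 t <= 1.
Proof.
  unfold plateau.
  destruct (step_range ((t - a0) / (a1 - a0))), (step_range ((b0 - t) / (b0 - b1))).
  split; [now apply Rmult_le_pos | rewrite <- (Rmult_1_r 1); now apply Rmult_le_compat].
Qed.

Lemma plateau_eq1 a0 a1 b1 b0 t :
  a0 < a1 -> b1 < b0 -> a1 <= t <= b1 -> plateau a0 a1 b1 b0 t = 1.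
Proof.
  intros Ha Hb Ht; unfold plateau.
  rewrite !step_eq1; [ring| |]; apply Rle_div_r; lra.
Qed.

Lemma plateau_eq0 a0 a1 b1 b0 t :
  a0 < a1 -> b1 < b0 -> t <= a0 \/ b0 <= t -> plateau a0 a1 b1 b0 t = 0.
Proof.
  intros Ha Hb [Ht|Ht]; unfold plateau;
    [rewrite (step_eq0 ((t - a0) / (a1 - a0))) | rewrite (step_eq0 ((b0 - t) / (b0 - b1)))];
    try ring; apply Rle_div_l; lra.
Qed.

Definition p35 (t : R) : R := t ^ 3 * (1 - t) ^ 2.

Lemma Cinf_p35 : Cinf p35.
Proof.
  apply Cinf_mult; apply Cinf_pow; [apply Cinf_id|].
  apply Cinf_ext with (fun t => -1 * t + 1); [apply Cinf_affine | intros; ring].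
Qed.

Lemma p35_pos t : 0 < t < 1 -> 0 < p35 t.
Proof. intros Ht; unfold p35; apply Rmult_lt_0_compat; apply pow_lt; lra. Qed.

Lemma p35_positive_extension a b : 0 < a -> b < 1 ->
  exists D, Cinf D /\ (forall t, 0 < D t) /\ (forall t, a <= t <= b -> D t = p35 t).
Proof.
  intros Ha Hb.
  set (chi := plateau (a / 2) a b ((1 + b) / 2)).
  exists (fun t => chi t * p35 t + (1 - chi t)); split; [|split].
  - apply Cinf_plus; [apply Cinf_mult; [apply Cinf_plateau | apply Cinf_p35]|].
    apply Cinf_ext with (fun t => -1 * chi t + 1);
      [apply Cinf_plus; [apply Cinf_mult|]; [apply Cinf_const | apply Cinf_plateau | apply Cinf_const]
      | intros; ring].
  - intros t; pose proof (plateau_range (a / 2) a b ((1 + b) / 2) t) as Hchi; fold chi in Hchi.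
    destruct (Rlt_dec 0 t) as [H0|H0]; [destruct (Rlt_dec t 1) as [H1|H1]|].
    + pose proof (p35_pos t (conj H0 H1)); nra.
    + unfold chi; rewrite plateau_eq0 by lra; lra.
    + unfold chi; rewrite plateau_eq0 by lra; lra.
  - intros t Ht; unfold chi; rewrite plateau_eq1 by lra; ring.
Qed.

(** * Hessian and orbital volume of a cohomogeneity-1 potential *)

Lemma locally_int_simplex x : int_simplex x -> locally x int_simplex.
Proof.
  destruct x as [a b]; intros [Ha [Hb Hc]]; unfold l1, l2, l3 in *; simpl in *.
  set (e := Rmin (Rmin a b) (1 - a - b) / 3).
  assert (He : 0 < e) by (unfold e; apply Rdiv_lt_0_compat; [repeat apply Rmin_glb_lt|]; lra).
  assert (e <= a / 3 /\ e <= b / 3 /\ e <= (1 - a - b) / 3) as [e1 [e2 e3]].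
  { unfold e; pose proof (Rmin_l (Rmin a b) (1 - a - b)); pose proof (Rmin_r (Rmin a b) (1 - a - b)).
    pose proof (Rmin_l a b); pose proof (Rmin_r a b); lra. }
  exists (mkposreal e He); intros [y1 y2] [H1 H2]; simpl in *.
  unfold ball in H1, H2; simpl in H1, H2.
  unfold AbsRing_ball, abs, minus, plus, opp in H1, H2; simpl in H1, H2.
  apply Rabs_def2 in H1; apply Rabs_def2 in H2.
  unfold int_simplex, l1, l2, l3; simpl; lra.
Qed.

Definition Kfun (f2 : R -> R) (t : R) : R := 1 + t * (/ (1 - t) + f2 t).
Definition Kfun' (f2 f3 : R -> R) (t : R) : R := / ((1 - t) * (1 - t)) + f2 t + t * f3 t.

Definition vol (f2 : R -> R) (y : R * R) : R :=
  / sqrt (Kfun f2 (fst y + snd y) / (4 * fst y * snd y)).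

Lemma vol_swap f2 a b : vol f2 (a, b) = vol f2 (b, a).
Proof. unfold vol; simpl; rewrite (Rplus_comm b a); f_equal; f_equal; f_equal; ring. Qed.

Lemma is_derive_inv_sqrt z : 0 < z -> is_derive (fun z => / sqrt z) z (- / (2 * z * sqrt z)).
Proof.
  intros Hz; pose proof (sqrt_lt_R0 z Hz) as Hsqrt; pose proof (sqrt_sqrt z (Rlt_le _ _ Hz)) as Esqrt.
  auto_derive; [lra|].
  rewrite Esqrt; field; lra.
Qed.

Lemma filterdiff_zero_fst (W : R * R -> R) a b :
  filterdiff W (locally (a, b)) (fun _ => 0) -> is_derive (fun r => W (r, b)) a 0.
Proof.
  intros HW; unfold is_derive.
  apply filterdiff_ext_lin with (fun _ => 0);
    [|intros y; unfold scal; simpl; unfold mult; simpl; ring].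
  apply (filterdiff_comp'_2 (fun r => r) (fun _ => b) (fun u v => W (u, v)) a
           (fun y => y) (fun _ => 0) (fun _ _ => 0)).
  - apply filterdiff_id.
  - eapply filterdiff_ext_lin; [apply filterdiff_const | reflexivity].
  - apply filterdiff_ext with W; [intros [u v]; reflexivity | exact HW].
Qed.

Lemma filterdiff_zero_snd (W : R * R -> R) a b :
  filterdiff W (locally (a, b)) (fun _ => 0) -> is_derive (fun r => W (a, r)) b 0.
Proof.
  intros HW; unfold is_derive.
  apply filterdiff_ext_lin with (fun _ => 0);
    [|intros y; unfold scal; simpl; unfold mult; simpl; ring].
  apply (filterdiff_comp'_2 (fun _ => a) (fun r => r) (fun u v => W (u, v)) b
           (fun _ => 0) (fun y => y) (fun _ _ => 0)).
  - eapply filterdiff_ext_lin; [apply filterdiff_const | reflexivity].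
  - apply filterdiff_id.
  - apply filterdiff_ext with W; [intros [u v]; reflexivity | exact HW].
Qed.

Definition has_derivs3 (f f1 f2 f3 : R -> R) : Prop :=
  forall t, 0 < t < 1 ->
    is_derive f t (f1 t) /\ is_derive f1 t (f2 t) /\ is_derive f2 t (f3 t).

Lemma upot_swap f a b : upot f (a, b) = upot f (b, a).
Proof.
  unfold upot, uG, l1, l2, l3; simpl.
  replace (1 - b - a) with (1 - a - b) by ring; rewrite (Rplus_comm b a); ring.
Qed.

Section Cohomogeneity_one.

Variables f f1 f2 f3 : R -> R.
Hypothesis f_derivs : has_derivs3 f f1 f2 f3.

Lemma is_derive_upot_fst r s : 0 < r -> 0 < s -> r + s < 1 ->
  is_derive (fun r' => upot f (r', s)) r ((ln r - ln (1 - r - s) + f1 (r + s)) / 2).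
Proof.
  intros Hr Hs Hrs; destruct (f_derivs (r + s)) as [Df _]; [lra|].
  unfold upot, uG, l1, l2, l3; simpl fst; simpl snd.
  auto_derive; [repeat split; try lra; eexists; exact Df|].
  rewrite (is_derive_unique (fun y : R => f y) _ _ Df); replace (1 + - r + - s) with (1 - r - s) by ring.
  field; lra.
Qed.

Lemma d11_upot a b : int_simplex (a, b) ->
  d11 (upot f) (a, b) = (/ a + / (1 - a - b) + f2 (a + b)) / 2.
Proof.
  intros [Ha [Hb Hc]]; unfold l1, l2, l3 in *; simpl in *; unfold d11; simpl.
  rewrite (Derive_ext_loc _ (fun r => (ln r - ln (1 - r - b) + f1 (r + b)) / 2)).
  - destruct (f_derivs (a + b)) as [_ [D2 _]]; [lra|].
    apply is_derive_unique; auto_derive; [repeat split; try lra; eexists; exact D2|].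
    rewrite (is_derive_unique (fun y : R => f1 y) _ _ D2); field; lra.
  - apply filter_imp with (fun r => 0 < r < 1 - b); [|apply (open_and _ _ (open_gt 0) (open_lt (1 - b))); lra].
    intros r Hr; apply is_derive_unique, is_derive_upot_fst; lra.
Qed.

Lemma d12_upot a b : int_simplex (a, b) ->
  d12 (upot f) (a, b) = (/ (1 - a - b) + f2 (a + b)) / 2.
Proof.
  intros [Ha [Hb Hc]]; unfold l1, l2, l3 in *; simpl in *; unfold d12; simpl.
  rewrite (Derive_ext_loc _ (fun s => (ln a - ln (1 - a - s) + f1 (a + s)) / 2)).
  - destruct (f_derivs (a + b)) as [_ [D2 _]]; [lra|].
    apply is_derive_unique; auto_derive; [repeat split; try lra; eexists; exact D2|].
    rewrite (is_derive_unique (fun y : R => f1 y) _ _ D2); field; lra.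
  - apply filter_imp with (fun s => 0 < s < 1 - a); [|apply (open_and _ _ (open_gt 0) (open_lt (1 - a))); lra].
    intros s Hs; apply is_derive_unique, is_derive_upot_fst; lra.
Qed.

Lemma d22_upot a b : int_simplex (a, b) ->
  d22 (upot f) (a, b) = (/ b + / (1 - a - b) + f2 (a + b)) / 2.
Proof.
  intros [Ha [Hb Hc]]; unfold l1, l2, l3 in *; simpl in *.
  transitivity (d11 (upot f) (b, a)).
  - unfold d11, d22; simpl; apply Derive_ext; intros s; apply Derive_ext; intros r.
    apply upot_swap.
  - rewrite d11_upot by (unfold int_simplex, l1, l2, l3; simpl; lra).
    rewrite (Rplus_comm b a); replace (1 - b - a) with (1 - a - b) by ring; reflexivity.
Qed.

Lemma d21_upot a b : int_simplex (a, b) -> d21 (upot f) (a, b) = d12 (upot f) (a, b).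
Proof.
  intros [Ha [Hb Hc]]; unfold l1, l2, l3 in *; simpl in *.
  transitivity (d12 (upot f) (b, a)).
  - unfold d12, d21; simpl; apply Derive_ext; intros s; apply Derive_ext; intros r.
    apply upot_swap.
  - rewrite !d12_upot by (unfold int_simplex, l1, l2, l3; simpl; lra).
    rewrite (Rplus_comm b a); replace (1 - b - a) with (1 - a - b) by ring; reflexivity.
Qed.

Lemma det_hess_upot a b : int_simplex (a, b) ->
  det_hess (upot f) (a, b) = Kfun f2 (a + b) / (4 * a * b).
Proof.
  intros Hx; unfold det_hess.
  rewrite d21_upot, d11_upot, d22_upot, d12_upot by exact Hx.
  destruct Hx as [Ha [Hb Hc]]; unfold Kfun, l1, l2, l3 in *; simpl in *.
  field; repeat split; lra.
Qed.

Lemma hess_posdef_upot_iff a b : int_simplex (a, b) ->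
  hess_posdef (upot f) (a, b) <-> 0 < Kfun f2 (a + b).
Proof.
  intros Hx; unfold hess_posdef.
  rewrite d21_upot, d11_upot, d22_upot, d12_upot by exact Hx.
  destruct Hx as [Ha [Hb Hc]]; unfold l1, l2, l3 in *; simpl in *.
  set (K := Kfun f2 (a + b)).
  (* the quadratic form splits into a square along [(b, -a)] and [K] along [(1, 1)] *)
  assert (Hsplit : forall v1 v2,
    (/ a + / (1 - a - b) + f2 (a + b)) / 2 * v1 * v1
    + (/ (1 - a - b) + f2 (a + b)) / 2 * v1 * v2
    + (/ (1 - a - b) + f2 (a + b)) / 2 * v2 * v1
    + (/ b + / (1 - a - b) + f2 (a + b)) / 2 * v2 * v2
    = ((v1 * b - v2 * a) ^ 2 / (a * b) + K * (v1 + v2) ^ 2) / (2 * (a + b))).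
  { intros; unfold K, Kfun; field; repeat split; lra. }
  assert (Hab : 0 < a * b) by nra.
  split.
  - intros Hpos.
    assert (Hne : (a, b) <> (0, 0)) by (intros E; injection E; lra).
    specialize (Hpos a b Hne); rewrite Hsplit in Hpos.
    replace (((a * b - b * a) ^ 2 / (a * b) + K * (a + b) ^ 2) / (2 * (a + b)))
      with (K * (a + b) / 2) in Hpos by (field; lra).
    nra.
  - intros HK v1 v2 Hv; rewrite Hsplit.
    apply Rdiv_lt_0_compat; [|lra].
    destruct (Req_dec (v1 + v2) 0) as [Hs|Hs].
    + assert (Hv1 : v1 <> 0) by (intros E; apply Hv; f_equal; lra).
      replace v2 with (- v1) by lra.
      replace (v1 * b - - v1 * a) with (v1 * (a + b)) by ring.
      pose proof (Rsqr_pos_lt (v1 * (a + b))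
                    ltac:(apply Rmult_integral_contrapositive; split; lra)).
      unfold Rsqr in *; replace (v1 + - v1) with 0 by ring.
      apply Rplus_lt_le_0_compat; [apply Rdiv_lt_0_compat; simpl; nra | simpl; nra].
    + pose proof (Rsqr_pos_lt _ Hs); unfold Rsqr in *.
      apply Rplus_le_lt_0_compat; [apply Rdiv_le_0_compat; [apply pow2_ge_0 | lra] | simpl; nra].
Qed.

Lemma is_derive_Kfun t : 0 < t < 1 -> is_derive (Kfun f2) t (Kfun' f2 f3 t).
Proof.
  intros Ht; destruct (f_derivs t Ht) as [_ [_ D3]]; unfold Kfun, Kfun'.
  auto_derive; [repeat split; try lra; eexists; exact D3|].
  rewrite (is_derive_unique (fun y : R => f2 y) _ _ D3); field; lra.
Qed.

Lemma orbital_volume_locally_vol x : int_simplex x ->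
  locally x (fun y => orbital_volume (upot f) y = vol f2 y).
Proof.
  intros Hx; apply filter_imp with int_simplex; [|now apply locally_int_simplex].
  intros [y1 y2] Hy; unfold orbital_volume, vol; now rewrite det_hess_upot.
Qed.

Lemma vol_fst_stationary a b : 0 < a -> 0 < b -> a + b < 1 -> 0 < Kfun f2 (a + b) ->
  is_derive (fun r => vol f2 (r, b)) a 0 -> Kfun' f2 f3 (a + b) * a = Kfun f2 (a + b).
Proof.
  intros Ha Hb Hab HK D0.
  set (Q := Kfun f2 (a + b) / (4 * a * b)).
  assert (HQ : 0 < Q) by (apply Rdiv_lt_0_compat; [|apply Rmult_lt_0_compat]; lra).
  assert (DQ : is_derive (fun r => Kfun f2 (r + b) / (4 * r * b)) a
                 ((Kfun' f2 f3 (a + b) * a - Kfun f2 (a + b)) / (4 * a * a * b))).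
  { pose proof (is_derive_Kfun (a + b) ltac:(lra)) as DK.
    auto_derive; [repeat split; try lra; [eexists; exact DK | nra]|].
    rewrite (is_derive_unique (fun y : R => Kfun f2 y) _ _ DK); field; lra. }
  pose proof (is_derive_comp (fun z => / sqrt z) (fun r => Kfun f2 (r + b) / (4 * r * b)) a _ _
                (is_derive_inv_sqrt Q HQ) DQ) as D1.
  pose proof (eq_trans (eq_sym (is_derive_unique _ _ _ D0)) (is_derive_unique _ _ _ D1)) as E0.
  unfold scal in E0; simpl in E0; unfold mult in E0; simpl in E0.
  pose proof (sqrt_lt_R0 Q HQ) as Hsqrt.
  assert (Hden : 0 < 4 * a * a * b) by (repeat apply Rmult_lt_0_compat; lra).
  symmetry in E0; apply Rmult_integral in E0; destruct E0 as [E0|E0].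
  - assert (Hnum : Kfun' f2 f3 (a + b) * a - Kfun f2 (a + b) = 0); [|lra].
    apply (Rmult_eq_reg_r (/ (4 * a * a * b))); [|apply Rinv_neq_0_compat; lra].
    rewrite Rmult_0_l; exact E0.
  - exfalso; revert E0; apply Ropp_neq_0_compat, Rinv_neq_0_compat.
    apply Rgt_not_eq; apply Rmult_lt_0_compat; lra.
Qed.

Lemma filterdiff_vol_diag a : 0 < a -> a + a < 1 -> 0 < Kfun f2 (a + a) ->
  Kfun f2 (a + a) = a * Kfun' f2 f3 (a + a) ->
  filterdiff (vol f2) (locally (a, a)) (fun _ => 0).
Proof.
  intros Ha Haa HK Hcrit.
  assert (Hsum : filterdiff (fun y : R * R => fst y + snd y) (locally (a, a)) (fun y => fst y + snd y)).
  { apply filterdiff_linear, (is_linear_plus (K := R_AbsRing) (V := R_NormedModule)). }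
  pose proof (filterdiff_comp' _ _ _ _ _ Hsum (is_derive_Kfun (a + a) ltac:(lra))) as DK.
  assert (D4 : filterdiff (fun y : R * R => 4 * fst y) (locally (a, a)) (fun y => 4 * fst y)).
  { apply filterdiff_linear.
    apply (is_linear_comp (fun t : R * R => fst t) (fun z : R => scal 4 z)); [apply is_linear_fst|].
    apply (@is_linear_scal_r R_AbsRing R_NormedModule 4); intros; apply Rmult_comm. }
  assert (Dsnd : filterdiff (fun y : R * R => snd y) (locally (a, a)) (fun y => snd y))
    by (apply filterdiff_linear, is_linear_snd).
  pose proof (filterdiff_mult_fct _ _ _ _ _ Rmult_comm D4 Dsnd) as Dprod.
  assert (Dinv : is_derive (fun z => / z) (4 * a * a) (- / ((4 * a * a) * (4 * a * a)))).
  { assert (Hne : 4 * a * a <> 0) by nra.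
    auto_derive; [exact Hne | ring]. }
  pose proof (filterdiff_comp' _ _ _ _ _ Dprod Dinv) as Dq.
  pose proof (filterdiff_mult_fct _ _ _ _ _ Rmult_comm DK Dq) as DQ.
  assert (HQ : 0 < Kfun f2 (a + a) * / (4 * a * a))
    by (apply Rmult_lt_0_compat; [|apply Rinv_0_lt_compat]; nra).
  pose proof (filterdiff_comp' _ _ _ _ _ DQ (is_derive_inv_sqrt _ HQ)) as DV.
  eapply filterdiff_ext_lin; [exact DV|].
  intros [h1 h2]; simpl; unfold scal, mult, plus; simpl; unfold mult; simpl.
  rewrite Hcrit; apply Rmult_eq_0_compat_r; field; lra.
Qed.

Lemma minimal_fibre_iff x : (forall t, 0 < t < 1 -> 0 < Kfun f2 t) ->
  minimal_fibre f x <-> int_simplex x /\ on_diagonal x /\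
    2 * Kfun f2 (fst x + snd x) - (fst x + snd x) * Kfun' f2 f3 (fst x + snd x) = 0.
Proof.
  intros Kpos; destruct x as [a b]; unfold minimal_fibre, on_diagonal; simpl; split.
  - intros [Hx HV].
    pose proof (filterdiff_ext_locally _ _ _ _ (orbital_volume_locally_vol _ Hx) HV) as HW.
    destruct Hx as [Ha [Hb Hc]]; unfold l1, l2, l3 in *; simpl in *.
    pose proof (Kpos (a + b) ltac:(lra)) as HK.
    pose proof (vol_fst_stationary a b Ha Hb ltac:(lra) HK (filterdiff_zero_fst _ _ _ HW)) as Ea.
    assert (Db : is_derive (fun r => vol f2 (r, a)) b 0).
    { apply is_derive_ext with (fun r => vol f2 (a, r));
        [intros; apply vol_swap | exact (filterdiff_zero_snd _ _ _ HW)]. }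
    rewrite (Rplus_comm a b) in HK.
    pose proof (vol_fst_stationary b a Hb Ha ltac:(lra) HK Db) as Eb.
    rewrite (Rplus_comm b a) in HK, Eb.
    assert (Hab : a = b).
    { assert (E : Kfun' f2 f3 (a + b) * (a - b) = 0) by lra.
      apply Rmult_integral in E; destruct E as [E|E]; [rewrite E in Ea|]; lra. }
    split; [unfold int_simplex, l1, l2, l3; simpl; lra | split; [exact Hab | lra]].
  - intros [Hx [Hab Hcrit]]; subst b; split; [exact Hx|].
    destruct Hx as [Ha [_ Hc]]; unfold l1, l2, l3 in *; simpl in *.
    apply filterdiff_ext_locally with (vol f2).
    + assert (Hx : int_simplex (a, a)) by (unfold int_simplex, l1, l2, l3; simpl; lra).
      apply (filter_imp _ _ (fun y Hy => eq_sym Hy) (orbital_volume_locally_vol _ Hx)).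
    + apply filterdiff_vol_diag; try lra; apply Kpos; lra.
Qed.

End Cohomogeneity_one.

(** * Metrics with a prescribed profile *)

Lemma Kfun_mul_id_pos w t : 0 < t < 1 -> 0 <= w t -> 0 < Kfun (fun t => t * w t) t.
Proof.
  intros Ht Hw.
  replace (Kfun (fun t => t * w t) t) with ((1 + t ^ 2 * (1 - t) * w t) / (1 - t))
    by (unfold Kfun; field; lra).
  apply Rdiv_lt_0_compat; [|lra].
  assert (0 <= t ^ 2 * (1 - t) * w t); [|lra].
  apply Rmult_le_pos; [apply Rmult_le_pos; [apply pow2_ge_0 | lra] | exact Hw].
Qed.

Lemma Kfun_mul_id_crit_iff w wp t : 0 < t < 1 ->
  2 * Kfun (fun t => t * w t) t - t * Kfun' (fun t => t * w t) (fun t => w t + t * wp t) t = 0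
  <-> wp t * p35 t = 2 - 3 * t.
Proof.
  intros Ht.
  assert (Hcrit : (2 * Kfun (fun t => t * w t) t
                   - t * Kfun' (fun t => t * w t) (fun t => w t + t * wp t) t) * (1 - t) ^ 2
                  = 2 - 3 * t - wp t * p35 t)
    by (unfold Kfun, Kfun', p35; field; lra).
  assert (0 < (1 - t) ^ 2) by (apply pow_lt; lra).
  split; intros E; rewrite E in Hcrit; [lra|].
  replace (2 - 3 * t - (2 - 3 * t)) with 0 in Hcrit by ring.
  apply Rmult_integral in Hcrit; lra.
Qed.

Lemma coh1_metric_of_profile (wp : R -> R) : Cinf wp ->
  exists f, coh1_metric f /\ forall x, minimal_fibre f x <->
    int_simplex x /\ on_diagonal x /\
    wp (fst x + snd x) * p35 (fst x + snd x) = 2 - 3 * (fst x + snd x).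
Proof.
  intros Cwp.
  set (W := fun t => RInt wp 0 t).
  assert (CW : Cinf W) by now apply Cinf_RInt.
  destruct (continuity_ab_min W 0 1) as [m [Hm _]];
    [lra | intros c _; apply continuity_pt_filterlim, Cinf_continuous, CW |].
  set (w := fun t => W t + - W m).
  assert (Cw : Cinf w) by (apply Cinf_plus; [exact CW | apply Cinf_const]).
  assert (w_ge0 : forall t, 0 <= t <= 1 -> 0 <= w t)
    by (intros t Ht; specialize (Hm t Ht); unfold w; lra).
  set (q := fun t => t * w t).
  assert (Cq : Cinf q) by (apply Cinf_mult; [apply Cinf_id | exact Cw]).
  set (F1 := fun t => RInt q 0 t).
  assert (CF1 : Cinf F1) by now apply Cinf_RInt.
  set (f := fun t => RInt F1 0 t).
  assert (Cf : Cinf f) by now apply Cinf_RInt.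
  assert (Dw : forall t, is_derive w t (wp t)).
  { intros t; unfold w; replace (wp t) with (wp t + 0) by ring.
    apply (is_derive_plus W (fun _ => - W m));
      [apply is_derive_RInt_0; intros; now apply Cinf_continuous | auto_derive; auto]. }
  assert (Hderivs : has_derivs3 f F1 q (fun t => w t + t * wp t)).
  { intros t _; split; [|split];
      [apply is_derive_RInt_0; intros; now apply Cinf_continuous ..|].
    unfold q; replace (w t + t * wp t) with (1 * w t + t * wp t) by ring.
    apply (is_derive_mult (fun t => t) w); [auto_derive; auto | apply Dw | intros; apply Rmult_comm]. }
  assert (Kpos : forall t, 0 < t < 1 -> 0 < Kfun q t)
    by (intros t Ht; apply Kfun_mul_id_pos; [|apply w_ge0]; lra).
  exists f; split; [split|].
  - exists 1; split; [lra|]; intros n t _; now apply Cinf_ex_derive_n.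
  - intros [a b] Hx; apply (hess_posdef_upot_iff f F1 q _ Hderivs _ _ Hx).
    destruct Hx as [Ha [Hb Hc]]; unfold l1, l2, l3 in *; simpl in *; apply Kpos; lra.
  - intros x; rewrite (minimal_fibre_iff f F1 q _ Hderivs x Kpos).
    split; intros [Hx [Hd E]]; (split; [exact Hx | split; [exact Hd |]]);
      destruct Hx as [Ha [Hb Hc]]; unfold l1, l2, l3 in *;
      apply (Kfun_mul_id_crit_iff w wp (fst x + snd x)); (lra || exact E).
Qed.

Lemma plateau_profile_eq a b D g t : 0 < a -> b < 1 ->
  (forall t, a / 2 <= t <= (1 + b) / 2 -> D t = p35 t) -> 0 < t < 1 ->
  plateau (a / 2) a b ((1 + b) / 2) t * ((2 - 3 * t) / D t + g t) * p35 t
  = plateau (a / 2) a b ((1 + b) / 2) t * (2 - 3 * t + g t * p35 t).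
Proof.
  intros Ha Hb HD Ht.
  destruct (Rle_dec t (a / 2)) as [Hlo|Hlo]; [|destruct (Rle_dec ((1 + b) / 2) t) as [Hhi|Hhi]].
  1, 2: rewrite plateau_eq0 by lra; ring.
  rewrite HD by lra; pose proof (p35_pos t Ht); field; lra.
Qed.

Lemma coh1_metric_of_plateau_profile a b g : 0 < a -> b < 1 -> Cinf g ->
  exists f, coh1_metric f /\ forall x, minimal_fibre f x <->
    int_simplex x /\ on_diagonal x /\
    plateau (a / 2) a b ((1 + b) / 2) (fst x + snd x)
      * (2 - 3 * (fst x + snd x) + g (fst x + snd x) * p35 (fst x + snd x))
    = 2 - 3 * (fst x + snd x).
Proof.
  intros Ha Hb Cg.
  destruct (p35_positive_extension (a / 2) ((1 + b) / 2)) as [D [CD [Dpos HD]]]; [lra .. |].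
  set (beta := plateau (a / 2) a b ((1 + b) / 2)).
  assert (Cwp : Cinf (fun t => beta t * ((2 - 3 * t) / D t + g t))).
  { apply Cinf_mult; [apply Cinf_plateau|]; apply Cinf_plus; [|exact Cg].
    apply Cinf_mult; [|apply Cinf_inv; [exact CD | intros t; pose proof (Dpos t); lra]].
    apply Cinf_ext with (fun t => -3 * t + 2); [apply Cinf_affine | intros; ring]. }
  destruct (coh1_metric_of_profile _ Cwp) as [f [Hf Hmin]].
  exists f; split; [exact Hf|]; intros x; rewrite Hmin.
  split; intros [Hx [Hd E]]; (split; [exact Hx | split; [exact Hd|]]);
    assert (Ht : 0 < fst x + snd x < 1) by (destruct Hx as [? [? ?]]; unfold l1, l2, l3 in *; lra);
    unfold beta in *; rewrite (plateau_profile_eq a b D g _ Ha Hb HD Ht) in *; exact E.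
Qed.

(** * Real-analytic functions *)

Definition analytic_at (h : R -> R) (t0 : R) : Prop :=
  exists r, 0 < r /\ exists c : nat -> R,
    forall y, Rabs (y - t0) < r -> is_pseries c (y - t0) (h y).

Lemma analytic_at_ext h k t0 : (forall y, h y = k y) -> analytic_at h t0 -> analytic_at k t0.
Proof.
  intros E [r [Hr [c Hc]]]; exists r; split; [exact Hr|].
  exists c; intros y Hy; rewrite <- E; auto.
Qed.

Lemma analytic_at_const c t0 : analytic_at (fun _ => c) t0.
Proof.
  exists 1; split; [lra|].
  exists (fun n => match n with O => c | S _ => 0 end); intros y _.
  apply filterlim_ext with (fun _ => c); [|apply filterlim_const].
  intros n; induction n as [|n IH]; [rewrite sum_O; cbn; ring|].
  rewrite sum_Sn, <- IH; cbn; ring.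
Qed.

Lemma analytic_at_plus h k t0 :
  analytic_at h t0 -> analytic_at k t0 -> analytic_at (fun y => h y + k y) t0.
Proof.
  intros [r1 [Hr1 [c1 H1]]] [r2 [Hr2 [c2 H2]]].
  exists (Rmin r1 r2); split; [now apply Rmin_glb_lt|].
  exists (PS_plus c1 c2); intros y Hy.
  pose proof (Rmin_l r1 r2); pose proof (Rmin_r r1 r2).
  apply (is_pseries_plus c1 c2); [apply H1 | apply H2]; lra.
Qed.

Lemma analytic_at_scal a h t0 : analytic_at h t0 -> analytic_at (fun y => a * h y) t0.
Proof.
  intros [r [Hr [c H]]]; exists r; split; [exact Hr|].
  exists (PS_scal a c); intros y Hy.
  apply (is_pseries_scal a c); [apply Rmult_comm | auto].
Qed.

Lemma analytic_at_mul_id h t0 : analytic_at h t0 -> analytic_at (fun y => y * h y) t0.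
Proof.
  intros Hh; apply analytic_at_ext with (fun y => t0 * h y + (y - t0) * h y); [intros; ring|].
  apply analytic_at_plus; [now apply analytic_at_scal|].
  destruct Hh as [r [Hr [c H]]]; exists r; split; [exact Hr|].
  exists (PS_incr_1 c); intros y Hy; apply (is_pseries_incr_1 c), H, Hy.
Qed.

Lemma CV_radius_gt_of_cvg (c : nat -> R) r :
  (forall z, Rabs z < r -> ex_pseries c z) ->
  forall z, Rabs z < r -> Rbar_lt (Rabs z) (CV_radius c).
Proof.
  intros Hc z Hz; set (z' := (Rabs z + r) / 2).
  assert (Hz' : Rabs z' = z') by (apply Rabs_pos_eq; pose proof (Rabs_pos z); unfold z'; lra).
  apply Rbar_lt_le_trans with (Finite z'); [simpl; unfold z'; lra|].
  apply Rbar_not_lt_le; intros Hout; rewrite <- Hz' in Hout.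
  apply (CV_disk_outside c z' Hout).
  eapply is_lim_seq_ext; [|apply ex_series_lim_0, (Hc z'); rewrite Hz'; unfold z'; lra].
  intros n; simpl; rewrite <- pow_n_pow; unfold scal; simpl; unfold mult; simpl; apply Rmult_comm.
Qed.

Lemma CV_radius_gt_of_pseries h t0 r (c : nat -> R) :
  (forall y, Rabs (y - t0) < r -> is_pseries c (y - t0) (h y)) ->
  forall y, Rabs (y - t0) < r -> Rbar_lt (Rabs (y - t0)) (CV_radius c).
Proof.
  intros H y; apply (CV_radius_gt_of_cvg c r); intros z Hz.
  exists (h (z + t0)); pose proof (H (z + t0)) as Hz'.
  replace (z + t0 - t0) with z in Hz' by ring; now apply Hz'.
Qed.

Lemma analytic_at_Derive h t0 : analytic_at h t0 -> analytic_at (Derive h) t0.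
Proof.
  intros [r [Hr [c H]]]; exists r; split; [exact Hr|].
  exists (PS_derive c); intros y Hy.
  pose proof (CV_radius_gt_of_pseries h t0 r c H y Hy) as Hrad.
  replace (Derive h y) with (PSeries (PS_derive c) (y - t0));
    [apply PSeries_correct, ex_pseries_derive, Hrad|].
  symmetry; apply is_derive_unique.
  apply is_derive_ext_loc with (fun u => PSeries c (u - t0)).
  - apply Rabs_def2 in Hy.
    apply filter_imp with (fun u => t0 - r < u < t0 + r);
      [|apply (open_and _ _ (open_gt _) (open_lt _)); lra].
    intros u Hu; apply is_pseries_unique, H, Rabs_def1; lra.
  - replace (PSeries (PS_derive c) (y - t0)) with (scal (1 : R) (PSeries (PS_derive c) (y - t0)))
      by (unfold scal; simpl; unfold mult; simpl; ring).
    apply (is_derive_comp (PSeries c) (fun u => u - t0));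
      [apply is_derive_PSeries, Hrad | auto_derive; auto].
Qed.

Lemma CV_radius_decr_n (a : nat -> R) k : CV_radius (PS_decr_n a k) = CV_radius a.
Proof.
  induction k as [|k IH]; [apply CV_radius_ext; reflexivity|].
  rewrite <- IH, <- (CV_radius_decr_1 (PS_decr_n a k)); apply CV_radius_ext.
  intros n; unfold PS_decr_n, PS_decr_1; f_equal; lia.
Qed.

Lemma analytic_at_zero_or_isolated h t0 : analytic_at h t0 ->
  (exists d, 0 < d /\ forall y, Rabs (y - t0) < d -> h y = 0) \/
  (exists d, 0 < d /\ forall y, 0 < Rabs (y - t0) < d -> h y <> 0).
Proof.
  intros [r [Hr [c H]]].
  destruct (classic (forall n, c n = 0)) as [Hzero|Hnz].
  - left; exists r; split; [exact Hr|]; intros y Hy.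
    rewrite <- (is_pseries_unique _ _ _ (H y Hy)), (PSeries_ext c (fun _ => 0)) by exact Hzero.
    apply PSeries_const_0.
  - right; apply not_all_ex_not in Hnz.
    destruct (Wf_nat.dec_inh_nat_subset_has_unique_least_element (fun n => c n <> 0)
                (fun n => classic _) Hnz) as [k [[Hk Hleast] _]].
    (* near [t0], [h y = (y - t0) ^ k * g (y - t0)] with [g] continuous and [g 0 = c k <> 0] *)
    set (g := PSeries (PS_decr_n c k)).
    assert (Hrad : Rbar_lt (Rabs 0) (CV_radius (PS_decr_n c k))).
    { rewrite CV_radius_decr_n; replace 0 with (t0 - t0) by ring.
      apply (CV_radius_gt_of_pseries h t0 r c H); rewrite Rminus_diag, Rabs_R0; exact Hr. }
    assert (Hg0 : g 0 <> 0) by (unfold g; rewrite PSeries_0; unfold PS_decr_n; now rewrite Nat.add_0_r).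
    destruct (PSeries_continuity _ _ Hrad (Rabs (g 0)) ltac:(now apply Rabs_pos_lt)) as [d [Hd Hcont]].
    exists (Rmin d r); split; [now apply Rmin_glb_lt|]; intros y [Hy1 Hy2].
    pose proof (Rmin_l d r); pose proof (Rmin_r d r).
    rewrite <- (is_pseries_unique _ _ _ (H y ltac:(lra))).
    rewrite (PSeries_decr_n_aux c k);
      [|intros i Hi; apply NNPP; intros Hci; specialize (Hleast i Hci); lia].
    apply Rmult_integral_contrapositive_currified.
    + apply pow_nonzero; intros E; rewrite E, Rabs_R0 in Hy1; lra.
    + intros E; fold g in E.
      assert (Hx : D_x no_cond 0 (y - t0)) by (split; [exact I | intros E0; rewrite <- E0, Rabs_R0 in Hy1; lra]).
      assert (Hdist : R_dist (y - t0) 0 < d) by (unfold R_dist; rewrite Rminus_0_r; lra).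
      specialize (Hcont (y - t0) (conj Hx Hdist)).
      simpl in Hcont; unfold R_dist in Hcont; fold g in Hcont.
      rewrite E, Rminus_0_l, Rabs_Ropp in Hcont; lra.
Qed.

Lemma exists_not_in_list (L : list R) c d : c < d -> exists y, c < y < d /\ ~ In y L.
Proof.
  revert c d; induction L as [|x L IH]; intros c d Hcd.
  - exists ((c + d) / 2); split; [lra | intros []].
  - destruct (Rle_dec x c) as [Hx|Hx]; [|destruct (Rle_dec d x) as [Hx'|Hx']].
    1, 2: destruct (IH c d Hcd) as [y [Hy Hn]]; exists y; split; [exact Hy|];
          intros [E|E]; [lra | contradiction].
    destruct (IH c x ltac:(lra)) as [y [Hy Hn]]; exists y; split; [lra|].
    intros [E|E]; [lra | contradiction].
Qed.

Definition finite_zeros_on (h : R -> R) (a b : R) : Prop :=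
  exists L : list R, forall t, a <= t <= b -> h t = 0 -> In t L.

Lemma finite_zeros_on_extend h a x s d :
  (forall y, 0 < Rabs (y - s) < d -> h y <> 0) -> s - d < x ->
  finite_zeros_on h a x -> finite_zeros_on h a (s + d / 2).
Proof.
  intros Hiso Hx [L HL]; exists (s :: L); intros t Ht Hz.
  destruct (Rle_dec t x) as [Htx|Htx]; [right; apply HL; lra|].
  destruct (Req_dec t s) as [E|E]; [left; congruence|].
  exfalso; apply (Hiso t); [|exact Hz].
  split; [apply Rabs_pos_lt; lra | apply Rabs_def1; lra].
Qed.

Lemma analytic_zeros_finite h a b :
  (forall t, a <= t <= b -> analytic_at h t) -> h a <> 0 -> finite_zeros_on h a b.
Proof.
  intros Han Ha.
  destruct (Rle_dec a b) as [Hab|Hab]; [|exists nil; intros t Ht; lra].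
  set (A := fun s => a <= s <= b /\ finite_zeros_on h a s).
  assert (Aa : A a).
  { split; [lra|]; exists nil; intros t Ht Hz; replace t with a in Hz by lra; contradiction. }
  destruct (completeness A) as [s [Hub Hlub]];
    [exists b; intros x [Hx _]; lra | exists a; exact Aa |].
  assert (Hs : a <= s <= b) by (split; [apply Hub, Aa | apply Hlub; intros x [Hx _]; lra]).
  assert (Happrox : forall e, 0 < e -> exists x, A x /\ s - e < x).
  { intros e He; apply NNPP; intros Hno.
    assert (s <= s - e); [|lra].
    apply Hlub; intros x Hx; apply Rnot_lt_le; intros Hlt; apply Hno; now exists x. }
  destruct (analytic_at_zero_or_isolated h s (Han s Hs)) as [[d [Hd Hzero]]|[d [Hd Hiso]]].
  - exfalso.
    destruct (Req_dec s a) as [E|E]; [apply Ha, Hzero; rewrite E, Rminus_diag, Rabs_R0; lra|].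
    destruct (Happrox (Rmin d (s - a))) as [x [[Hx [L HL]] Hsx]]; [apply Rmin_glb_lt; lra|].
    assert (x <= s) by (apply Hub; split; [exact Hx | now exists L]).
    pose proof (Rmin_l d (s - a)); pose proof (Rmin_r d (s - a)).
    pose proof (Rmax_l (s - d) a); pose proof (Rmax_r (s - d) a).
    destruct (exists_not_in_list L (Rmax (s - d) a) x) as [y [Hy Hny]]; [apply Rmax_lub_lt; lra|].
    apply Hny, HL; [lra|]; apply Hzero, Rabs_def1; lra.
  - destruct (Happrox d Hd) as [x [[Hx Hfin] Hsx]].
    pose proof (finite_zeros_on_extend h a x s d Hiso Hsx Hfin) as [L HL].
    destruct (Rle_dec b (s + d / 2)) as [Hb|Hb].
    + exists L; intros t Ht; apply HL; lra.
    + assert (s + d / 2 <= s); [|lra].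
      apply Hub; split; [lra | now exists L].
Qed.

Lemma coh1_metric_derivs f : coh1_metric f ->
  has_derivs3 f (Derive f) (Derive (Derive f)) (Derive (Derive (Derive f))) /\
  (forall t, 0 < t < 1 -> 0 < Kfun (Derive (Derive f)) t).
Proof.
  intros [[eps [He Hsmooth]] Hpos].
  assert (Hderivs : has_derivs3 f (Derive f) (Derive (Derive f)) (Derive (Derive (Derive f)))).
  { intros t Ht; assert (Ht' : - eps < t < 1 + eps) by lra.
    pose proof (Hsmooth 1%nat t Ht') as H1; pose proof (Hsmooth 2%nat t Ht') as H2;
      pose proof (Hsmooth 3%nat t Ht') as H3; simpl in H1, H2, H3.
    split; [|split]; apply Derive_correct; [exact H1|..].
    - eapply ex_derive_ext; [|exact H2]; reflexivity.
    - eapply ex_derive_ext; [|exact H3]; intros; apply Derive_ext; reflexivity. }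
  split; [exact Hderivs|]; intros t Ht.
  assert (Hx : int_simplex (t / 2, t / 2)) by (unfold int_simplex, l1, l2, l3; simpl; lra).
  pose proof (proj1 (hess_posdef_upot_iff _ _ _ _ Hderivs _ _ Hx) (Hpos _ Hx)) as HK.
  now replace (t / 2 + t / 2) with t in HK by field.
Qed.

Lemma minimal_fibre_on_diagonal f x : coh1_metric f -> minimal_fibre f x -> on_diagonal x.
Proof.
  intros Hf Hx; destruct (coh1_metric_derivs f Hf) as [Hderivs Kpos].
  now apply (minimal_fibre_iff _ _ _ _ Hderivs x Kpos) in Hx.
Qed.

Lemma analytic_coh1_minimal_fibres_finite f : coh1_metric f -> coh1_analytic f ->
  exists ps, forall x, minimal_fibre f x -> In x ps.
Proof.
  intros Hf [eps [He Han]].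
  destruct (coh1_metric_derivs f Hf) as [Hderivs Kpos].
  set (f2 := Derive (Derive f)) in *; set (f3 := Derive f2) in *.
  (* [M t = (1 - t) ^ 2 * (2 K t - t K' t)] *)
  set (M := fun t => 2 - 3 * t + (1 - t) ^ 2 * (t * f2 t - t ^ 2 * f3 t)).
  assert (HM : forall t, 0 <= t <= 1 -> analytic_at M t).
  { intros t Ht.
    assert (A2 : analytic_at f2 t) by (apply analytic_at_Derive, analytic_at_Derive, Han; lra).
    assert (A3 : analytic_at f3 t) by now apply analytic_at_Derive.
    set (X := fun y => y * f2 y + -1 * (y * (y * f3 y))).
    assert (AX : analytic_at X t).
    { apply analytic_at_plus; [|apply analytic_at_scal]; repeat apply analytic_at_mul_id; assumption. }
    apply analytic_at_ext with (fun y => 2 + -3 * (y * 1) + (X y + -2 * (y * X y) + y * (y * X y)));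
      [intros; unfold M, X; ring|].
    repeat first [ exact AX | apply analytic_at_plus | apply analytic_at_scal
                 | apply analytic_at_mul_id | apply analytic_at_const ]. }
  assert (HM0 : M 0 <> 0) by (replace (M 0) with 2 by (unfold M; ring); lra).
  destruct (analytic_zeros_finite M 0 1 HM HM0) as [L HL].
  exists (map (fun t => (t / 2, t / 2)) L); intros x Hx.
  apply (minimal_fibre_iff _ _ _ _ Hderivs x Kpos) in Hx.
  destruct x as [a b]; destruct Hx as [[Ha [Hb Hc]] [Hd Hcrit]].
  unfold on_diagonal, l1, l2, l3 in *; simpl in *; subst b.
  apply in_map_iff; exists (a + a); split; [f_equal; field|].
  apply HL; [lra|].
  replace (M (a + a)) with
    ((1 - (a + a)) ^ 2 * (2 * Kfun f2 (a + a) - (a + a) * Kfun' f2 f3 (a + a)))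
    by (unfold M, Kfun, Kfun'; field; lra).
  rewrite Hcrit; ring.
Qed.

Lemma injective_not_into_list {A : Type} (g : R -> A) (ps : list A) :
  (forall s t, g s = g t -> s = t) -> ~ (forall s, In (g s) ps).
Proof.
  intros Hinj Hin.
  set (l := map (fun k => g (INR k)) (seq 0 (S (length ps)))).
  assert (Hnd : NoDup l).
  { apply Injective_map_NoDup; [intros m n E; apply INR_eq, Hinj, E | apply seq_NoDup]. }
  assert (Hincl : incl l ps).
  { intros y Hy; apply in_map_iff in Hy; destruct Hy as [k [<- _]]; apply Hin. }
  pose proof (NoDup_incl_length Hnd Hincl) as Hlen; unfold l in Hlen.
  rewrite length_map, length_seq in Hlen; lia.
Qed.

Lemma coh1_metric_with_continuum_of_minimal_fibres :
  exists f, coh1_metric f /\ ~ coh1_analytic f /\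
    exists g : R -> R * R, (forall s t, g s = g t -> s = t) /\ forall s, minimal_fibre f (g s).
Proof.
  destruct (coh1_metric_of_plateau_profile (1 / 4) (1 / 2) (fun _ => 0)) as [f [Hf Hmin]];
    [lra | lra | apply Cinf_const |].
  set (tau := fun s => 3 / 8 + atan s / 16).
  set (g := fun s => (tau s / 2, tau s / 2)).
  assert (Hg_inj : forall s t, g s = g t -> s = t).
  { intros s t E; injection E; intros _ E1.
    assert (Hatan : atan s = atan t) by (unfold tau in E1; lra).
    destruct (Rtotal_order s t) as [Hst|[Hst|Hst]]; [| exact Hst |]; apply atan_increasing in Hst; lra. }
  assert (Hg_min : forall s, minimal_fibre f (g s)).
  { intros s; apply Hmin; simpl.
    assert (Htau : 1 / 4 < tau s < 1 / 2) by (pose proof (atan_bound s); pose proof PI_4; unfold tau; lra).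
    replace (tau s / 2 + tau s / 2) with (tau s) by field.
    split; [unfold int_simplex, l1, l2, l3; simpl; lra | split; [reflexivity|]].
    rewrite plateau_eq1 by lra; ring. }
  exists f; split; [exact Hf|]; split; [|now exists g].
  intros Han; destruct (analytic_coh1_minimal_fibres_finite f Hf Han) as [ps Hps].
  apply (injective_not_into_list g ps Hg_inj); intros s; apply Hps, Hg_min.
Qed.

Definition sq_prod (ts : list R) (t : R) : R := fold_right (fun s acc => (t - s) ^ 2 * acc) 1 ts.

Lemma Cinf_sq_prod ts : Cinf (sq_prod ts).
Proof.
  induction ts as [|s ts IH]; [exact (Cinf_const 1)|].
  apply (Cinf_mult (fun t => (t - s) ^ 2) (sq_prod ts)); [|exact IH].
  apply Cinf_pow, Cinf_ext with (fun t => 1 * t + - s); [apply Cinf_affine | intros; ring].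
Qed.

Lemma sq_prod_ge0 ts t : 0 <= sq_prod ts t.
Proof.
  induction ts as [|s ts IH]; simpl; [lra|].
  apply Rmult_le_pos; [apply pow2_ge_0 | exact IH].
Qed.

Lemma sq_prod_eq0 ts t : sq_prod ts t = 0 <-> In t ts.
Proof.
  induction ts as [|s ts IH]; simpl; [split; [lra | intros []]|].
  rewrite <- IH; split.
  - intros E; apply Rmult_integral in E; destruct E as [E|E]; [left|right; exact E].
    assert (Hts : t - s = 0) by (apply Rsqr_0_uniq; unfold Rsqr; simpl in E; lra); lra.
  - intros [<-|E]; [ring | rewrite E; ring].
Qed.

Lemma finite_subset_in_closed_subinterval (ts : list R) :
  (forall t, In t ts -> 0 < t < 1) -> exists a b, 0 < a /\ b < 1 /\ forall t, In t ts -> a <= t <= b.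
Proof.
  induction ts as [|s ts IH]; intros Hts.
  - exists (1 / 2), (1 / 2); split; [lra | split; [lra | intros t []]].
  - destruct IH as [a [b [Ha [Hb Hab]]]]; [intros t Ht; apply Hts; now right|].
    pose proof (Hts s (or_introl eq_refl)).
    exists (Rmin a s), (Rmax b s); split; [now apply Rmin_glb_lt|]; split; [now apply Rmax_lub_lt|].
    pose proof (Rmin_l a s); pose proof (Rmin_r a s); pose proof (Rmax_l b s); pose proof (Rmax_r b s).
    intros t [<-|Ht]; [lra|]; specialize (Hab t Ht); lra.
Qed.

Lemma eq_zero_of_scaled_sum beta u G : 0 <= beta <= 1 ->
  (beta < 1 -> (G <= 0 /\ 0 < u) \/ (0 <= G /\ u < 0)) ->
  beta * (u + G) = u -> G = 0.
Proof.
  intros Hbeta Hsign E.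
  destruct (Req_dec beta 1) as [->|Hne]; [lra|].
  destruct (Hsign ltac:(lra)) as [[HG Hu]|[HG Hu]]; nra.
Qed.

Lemma plateau_profile_root a b t0 G t : 0 < a -> b < 1 -> a <= 2 / 3 <= b -> a <= t0 <= b ->
  (forall s, s < t0 -> G s <= 0) -> (forall s, t0 < s -> 0 <= G s) -> 0 < t < 1 ->
  plateau (a / 2) a b ((1 + b) / 2) t * (2 - 3 * t + G t * p35 t) = 2 - 3 * t -> G t = 0.
Proof.
  intros Ha Hb H23 Ht0 Hneg Hpos Ht E.
  pose proof (p35_pos t Ht) as Hp.
  assert (Hsign : plateau (a / 2) a b ((1 + b) / 2) t < 1 ->
            (G t * p35 t <= 0 /\ 0 < 2 - 3 * t) \/ (0 <= G t * p35 t /\ 2 - 3 * t < 0)).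
  { intros Hlt.
    destruct (Rlt_dec t a) as [Hlo|Hlo]; [left | destruct (Rlt_dec b t) as [Hhi|Hhi]; [right|]].
    - pose proof (Hneg t ltac:(lra)); split; [nra | lra].
    - pose proof (Hpos t ltac:(lra)); split; [nra | lra].
    - rewrite plateau_eq1 in Hlt; lra. }
  pose proof (eq_zero_of_scaled_sum _ _ _ (plateau_range _ _ _ _ t) Hsign E) as HGp.
  apply Rmult_integral in HGp; lra.
Qed.

Lemma diagonal_eq_of_sum p q : on_diagonal p -> on_diagonal q -> fst p + snd p = fst q + snd q -> p = q.
Proof.
  destruct p as [p1 p2], q as [q1 q2]; unfold on_diagonal; simpl; intros Hp Hq E.
  f_equal; lra.
Qed.

Lemma coh1_metric_with_prescribed_minimal_fibres ps : ps <> nil ->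
  (forall p, In p ps -> int_simplex p /\ on_diagonal p) ->
  exists f, coh1_metric f /\ forall x, minimal_fibre f x <-> In x ps.
Proof.
  intros Hne Hps; destruct ps as [|p0 ps']; [contradiction|]; set (ps := p0 :: ps') in *.
  set (ts := map (fun p => fst p + snd p) ps).
  set (t0 := fst p0 + snd p0).
  assert (Hts : forall t, In t (2 / 3 :: ts) -> 0 < t < 1).
  { intros t [<-|Ht]; [lra|]; apply in_map_iff in Ht; destruct Ht as [p [<- Hp]].
    destruct (Hps p Hp) as [[H1 [H2 H3]] _]; unfold l1, l2, l3 in *; lra. }
  destruct (finite_subset_in_closed_subinterval _ Hts) as [a [b [Ha [Hb Hab]]]].
  assert (H23 : a <= 2 / 3 <= b) by (apply Hab; now left).
  assert (Ht0 : a <= t0 <= b) by (apply Hab; right; now left).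
  set (G := fun t => (t - t0) * sq_prod ts t).
  assert (CG : Cinf G).
  { apply Cinf_mult; [|apply Cinf_sq_prod].
    apply Cinf_ext with (fun t => 1 * t + - t0); [apply Cinf_affine | intros; ring]. }
  assert (HG : forall t, G t = 0 <-> In t ts).
  { intros t; unfold G; rewrite <- sq_prod_eq0; split; [|intros ->; ring].
    intros E; apply Rmult_integral in E; destruct E as [E|E]; [|exact E].
    apply sq_prod_eq0; replace t with t0 by lra; now left. }
  assert (Gneg : forall s, s < t0 -> G s <= 0)
    by (intros s Hs; unfold G; pose proof (sq_prod_ge0 ts s); nra).
  assert (Gpos : forall s, t0 < s -> 0 <= G s)
    by (intros s Hs; unfold G; pose proof (sq_prod_ge0 ts s); nra).
  destruct (coh1_metric_of_plateau_profile a b G Ha Hb CG) as [f [Hf Hmin]].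
  exists f; split; [exact Hf|]; intros x; rewrite Hmin.
  split.
  - intros [Hx [Hd E]].
    assert (Ht : 0 < fst x + snd x < 1) by (destruct Hx as [? [? ?]]; unfold l1, l2, l3 in *; lra).
    pose proof (plateau_profile_root a b t0 G _ Ha Hb H23 Ht0 Gneg Gpos Ht E) as HGt.
    apply HG, in_map_iff in HGt; destruct HGt as [p [Ep Hp]].
    replace x with p; [exact Hp|].
    apply diagonal_eq_of_sum; [apply Hps, Hp | exact Hd | exact Ep].
  - intros Hx; destruct (Hps x Hx) as [Hint Hd]; split; [exact Hint | split; [exact Hd|]].
    assert (Hin : In (fst x + snd x) ts) by (apply in_map_iff; now exists x).
    rewrite plateau_eq1 by (pose proof (Hab _ (or_intror Hin)); lra).
    rewrite (proj2 (HG _) Hin); ring.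
Qed.

Theorem mainTheorem7 :
  (* (a) minimal Lagrangian fibres lie over the on_diagonal *)
  (forall f : R -> R, coh1_metric f ->
     forall x : R * R, minimal_fibre f x -> on_diagonal x) /\
  (* (b) analytic metrics have finitely many minimal Lagrangian fibres *)
  (forall f : R -> R, coh1_metric f -> coh1_analytic f ->
     exists ps : list (R * R), forall x : R * R, minimal_fibre f x -> List.In x ps) /\
  (* (c) a non-analytic metric with a continuum of minimal fibres *)
  (exists f : R -> R, coh1_metric f /\ ~ coh1_analytic f /\
     exists g : R -> R * R,
       (forall s t : R, g s = g t -> s = t) /\
       (forall s : R, minimal_fibre f (g s))) /\
  (* (d) prescribing any nonempty finite set in int P on the on_diagonal *)
  (forall ps : list (R * R), ps <> nil ->
     (forall p : R * R, List.In p ps -> int_simplex p /\ on_diagonal p) ->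
     exists f : R -> R, coh1_metric f /\
       forall x : R * R, minimal_fibre f x <-> List.In x ps).
Proof.
  split; [intros f Hf x; exact (minimal_fibre_on_diagonal f x Hf)|].
  split; [exact analytic_coh1_minimal_fibres_finite|].
  split; [exact coh1_metric_with_continuum_of_minimal_fibres|].
  exact coh1_metric_with_prescribed_minimal_fibres.
Qed.
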